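(* Let $n\ge1$, let $\mathbf u(z),\mathbf v(z)\in\mathbb R^n$ be column vector functions, and let $A$ be a constant real skew-symmetric $n\times n$ matrix. Define the block matrices of block size $(1,n,1)\times(1,n,1)$ \[ {\cal B}_0=\begin{pmatrix} -1 & 0 & 0\\ 0 & 0 & 0\\ 0 & 0 & 1 \end{pmatrix},\quad {\cal B}_1=\begin{pmatrix} 0 & -\mathbf v^T & 0\\ \mathbf u & 0 & -\mathbf v\\ 0 & \mathbf u^T & 0 \end{pmatrix},\quad {\cal B}_2=\begin{pmatrix} -(\mathbf u,\mathbf v) & (\mathbf v')^T & 0\\ \mathbf u' & \mathbf u\mathbf v^T-\mathbf v\mathbf u^T+A & \mathbf v'\\ 0 & (\mathbf u')^T & (\mathbf u,\mathbf v) \end{pmatrix}, \] and ${\cal B}=\zeta{\cal B}_0+{\cal B}_1$. Then: (a) The system \[ \mathbf u''+2(\mathbf u,\mathbf v)\mathbf u-(\mathbf u,\mathbf u)\mathbf v+\tfrac12 z\mathbf u+A\mathbf u=0,\qquad \mathbf v''+2(\mathbf u,\mathbf v)\mathbf v-(\mathbf v,\mathbf v)\mathbf u+\tfrac12 z\mathbf v-A\mathbf v=0 \] admits the isomonodromic Lax representation ${\cal A}'={\cal B}_\zeta+[{\cal B},{\cal A}]$ with ${\cal A}=(2\zeta^2+z){\cal B}_0+2\zeta{\cal B}_1+2{\cal B}_2$. (b) The system \[ \mathbf u''+2(\mathbf u,\mathbf v)\mathbf u-(\mathbf u,\mathbf u)\mathbf v+\tfrac12 (z\mathbf u)'+A\mathbf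 u=0,\qquad \mathbf v''+2(\mathbf u,\mathbf v)\mathbf v-(\mathbf v,\mathbf v)\mathbf u-\tfrac12 (z\mathbf v)'-A\mathbf v=0 \] admits the isomonodromic Lax representation ${\cal A}'={\cal B}_\zeta+[{\cal B},{\cal A}]$ with ${\cal A}=(2+z\zeta^{-1})(\zeta{\cal B}_0+{\cal B}_1)+2\zeta^{-1}{\cal B}_2$.
   Context: Primes denote derivatives with respect to $z$; $\zeta$ is a spectral parameter independent of $z$; $(\cdot,\cdot)$ is the standard scalar product on $\mathbb R^n$. ''Admits the Lax representation'' means the matrix equation holds identically in $\zeta$ by virtue of the system. *)

From HB Require Import structures.
From mathcomp Require Import all_boot all_order all_algebra.
From mathcomp Require Import all_classical all_reals all_analysis.
Set Implicit Arguments. Unset Strict Implicit. Unset Printing Implicit Defensive.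
Import Order.TTheory GRing.Theory Num.Theory.
Import numFieldNormedType.Exports.
Local Open Scope ring_scope.

Definition dotv (R : realType) (n : nat) (u v : 'cV[R]_n) : R :=
  \sum_(i < n) u i 0 * v i 0.

Definition blk3 (R : realType) (n : nat)
  (a11 : 'M[R]_1) (a12 : 'M[R]_(1, n)) (a13 : 'M[R]_1)
  (a21 : 'M[R]_(n, 1)) (a22 : 'M[R]_n) (a23 : 'M[R]_(n, 1))
  (a31 : 'M[R]_1) (a32 : 'M[R]_(1, n)) (a33 : 'M[R]_1) : 'M[R]_(1 + n + 1) :=
  block_mx (block_mx a11 a12 a21 a22) (col_mx a13 a23)
           (row_mx a31 a32) a33.

Definition calB0 (R : realType) (n : nat) : 'M[R]_(1 + n + 1) :=
  blk3 (-1) 0 0  0 0 0  0 0 1.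

Definition calB1 (R : realType) (n : nat) (u v : 'cV[R]_n) : 'M[R]_(1 + n + 1) :=
  blk3 0 (- v^T) 0  u 0 (- v)  0 u^T 0.

Definition calB2 (R : realType) (n : nat) (A : 'M[R]_n) (u v du dv : 'cV[R]_n)
  : 'M[R]_(1 + n + 1) :=
  blk3 (- (dotv u v)%:M) dv^T 0
       du (u *m v^T - v *m u^T + A) dv
       0 du^T (dotv u v)%:M.

Definition commmx (R : realType) (m : nat) (X Y : 'M[R]_m) : 'M[R]_m :=
  X *m Y - Y *m X.

(* The spectral derivative of B = zeta B0 + B1 is B0, and commuting with
   B0 = diag(-1, 0, 1) only rescales the blocks of a matrix: [B0, B2] = B1(u', v')
   is the z-derivative of B1, and [B0, B1(u, v)] = B1(u, -v).  Expanding [B, A] in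
   powers of zeta, both Lax equations therefore reduce to one zeta-free identity,
   valid for every skew-symmetric A:
     B2' = [B1, B2] + B1(P, -Q),
   with P = u'' + 2(u,v)u - (u,u)v + Au and Q = v'' + 2(u,v)v - (v,v)u - Av.
   The equations of (a) turn B1(P, -Q) into -(z/2)[B0, B1], those of (b) into
   -(1/2)(z B1)'. *)

From HB Require Import structures.
From mathcomp Require Import all_boot all_order all_algebra.
From mathcomp Require Import all_classical all_reals all_analysis.
From mathcomp Require Import ring.
Import Order.TTheory GRing.Theory Num.Theory.
Import numFieldNormedType.Exports.
Local Open Scope ring_scope.

Set Implicit Arguments.
Unset Strict Implicit.
Unset Printing Implicit Defensive.

Section MatrixDerive.
Variables (R : realFieldType) (V : normedModType R) (x v : V).

Lemma is_derive_mxP m n (M : V -> 'M[R]_(m, n)) (dM : 'M[R]_(m, n)) :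
  is_derive x v M dM <-> forall i j, is_derive x v (fun t => M t i j) (dM i j).
Proof.
split=> [dMx i j | dMx].
- have /derivable_mxP Mij := @ex_derive _ _ _ _ _ _ _ dMx.
  apply: DeriveDef; first exact: Mij.
  have := @derive_val _ _ _ _ _ _ _ dMx.
  by rewrite derive_mx // => /matrixP /(_ i j); rewrite mxE.
- have Md : derivable M x v by apply/derivable_mxP => i j; exact: ex_derive.
  apply: DeriveDef => //; rewrite derive_mx //.
  by apply/matrixP => i j; rewrite mxE derive_val.
Qed.

Global Instance is_derive_mulmx m p q (f : V -> 'M[R]_(m, p)) (g : V -> 'M[R]_(p, q))
    df dg :
  is_derive x v f df -> is_derive x v g dg ->
  is_derive x v (fun t => f t *m g t) (df *m g x + f x *m dg).
Proof.
move=> /is_derive_mxP df_ /is_derive_mxP dg_; apply/is_derive_mxP => i j.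
rewrite !mxE -big_split /=.
have -> : (fun t => (f t *m g t) i j) = \sum_(k < p) (fun t => f t i k * g t k j).
  by apply/funext => t; rewrite mxE fct_sumE.
apply: (is_derive_eq (is_derive_sum (fun k => is_deriveM (df_ i k) (dg_ k j)))).
by apply: eq_bigr => k _; rewrite [RHS]addrC; congr (_ + _); exact: mulrC.
Qed.

Global Instance is_derive_scalemx m n (c : V -> R) (f : V -> 'M[R]_(m, n)) dc df :
  is_derive x v c dc -> is_derive x v f df ->
  is_derive x v (fun t => c t *: f t) (dc *: f x + c x *: df).
Proof.
move=> dc_ /is_derive_mxP df_; apply/is_derive_mxP => i j.
rewrite !mxE; under eq_fun do rewrite mxE.
apply: (is_derive_eq (is_deriveM dc_ (df_ i j))).
by rewrite addrC; congr (_ + _); exact: mulrC.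
Qed.

Global Instance is_derive_trmx m n (f : V -> 'M[R]_(m, n)) df :
  is_derive x v f df -> is_derive x v (fun t => (f t)^T) df^T.
Proof.
move=> /is_derive_mxP df_; apply/is_derive_mxP => i j.
by rewrite mxE; under eq_fun do rewrite mxE.
Qed.

Global Instance is_derive_row_mx m n1 n2 (f : V -> 'M[R]_(m, n1))
    (g : V -> 'M[R]_(m, n2)) df dg :
  is_derive x v f df -> is_derive x v g dg ->
  is_derive x v (fun t => row_mx (f t) (g t)) (row_mx df dg).
Proof.
move=> /is_derive_mxP df_ /is_derive_mxP dg_; apply/is_derive_mxP => i j.
rewrite mxE; under eq_fun do rewrite mxE.
by case: (fintype.split j).
Qed.

Global Instance is_derive_col_mx m1 m2 n (f : V -> 'M[R]_(m1, n))
    (g : V -> 'M[R]_(m2, n)) df dg :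
  is_derive x v f df -> is_derive x v g dg ->
  is_derive x v (fun t => col_mx (f t) (g t)) (col_mx df dg).
Proof.
move=> /is_derive_mxP df_ /is_derive_mxP dg_; apply/is_derive_mxP => i j.
rewrite mxE; under eq_fun do rewrite mxE.
by case: (fintype.split i).
Qed.

Global Instance is_derive_scalar_mx n (c : V -> R) dc :
  is_derive x v c dc -> is_derive x v (fun t => (c t)%:M : 'M[R]_n) dc%:M.
Proof.
move=> dc_; apply/is_derive_mxP => i j.
rewrite mxE; under eq_fun do rewrite mxE.
case: (i == j).
- by under eq_fun do rewrite mulr1n; rewrite mulr1n.
- under eq_fun do rewrite mulr0n.
  by rewrite mulr0n; exact: is_derive_cst.
Qed.

End MatrixDerive.

Lemma derivable1_is_derive (R : realFieldType) (W : normedModType R) (f : R -> W) (z : R) :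
  derivable f z 1 -> is_derive z 1 f (derive1 f z).
Proof. by rewrite derive1E; exact: derivableP. Qed.

Section Transpose.
Variable R : pzRingType.

Lemma trmxD m n (X Y : 'M[R]_(m, n)) : (X + Y)^T = X^T + Y^T.
Proof. exact: raddfD. Qed.

Lemma trmxN m n (X : 'M[R]_(m, n)) : (- X)^T = - X^T.
Proof. exact: raddfN. Qed.

Lemma trmxZ m n a (X : 'M[R]_(m, n)) : (a *: X)^T = a *: X^T.
Proof. exact: linearZ. Qed.

End Transpose.

Section DotProduct.
Variables (R : realType) (n : nat).
Implicit Types x y w : 'cV[R]_n.

Lemma trmx_mul_dotv x y : x^T *m y = (dotv x y)%:M.
Proof.
apply/matrixP => i j; rewrite !ord1 !mxE eqxx mulr1n.
by apply: eq_bigr => k _; rewrite mxE.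
Qed.

Lemma dotvC x y : dotv x y = dotv y x.
Proof. by apply: eq_bigr => k _; rewrite mulrC. Qed.

Lemma mulmx_outerr x y w : x *m y^T *m w = dotv y w *: x.
Proof. by rewrite -mulmxA trmx_mul_dotv mul_mx_scalar. Qed.

Lemma mulmx_outerl x y w : w^T *m (x *m y^T) = dotv w x *: y^T.
Proof. by rewrite mulmxA trmx_mul_dotv mul_scalar_mx. Qed.

Global Instance is_derive_dotv (V : normedModType R) (a e : V) (f g : V -> 'cV[R]_n)
    df dg :
  is_derive a e f df -> is_derive a e g dg ->
  is_derive a e (fun t => dotv (f t) (g t)) (dotv df (g a) + dotv (f a) dg).
Proof.
move=> df_ dg_.
have /is_derive_mxP/(_ ord0 ord0) := is_derive_mulmx (is_derive_trmx df_) dg_.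
under eq_fun do rewrite trmx_mul_dotv mxE eqxx mulr1n.
by rewrite !trmx_mul_dotv !mxE eqxx !mulr1n.
Qed.

End DotProduct.

Section BlockMatrices.
Variables (R : realType) (n : nat).

Lemma add_blk3 (a11 a13 a31 a33 b11 b13 b31 b33 : 'M[R]_1)
    (a12 a32 b12 b32 : 'M[R]_(1, n)) (a21 a23 b21 b23 : 'M[R]_(n, 1))
    (a22 b22 : 'M[R]_n) :
  blk3 a11 a12 a13 a21 a22 a23 a31 a32 a33 + blk3 b11 b12 b13 b21 b22 b23 b31 b32 b33 =
  blk3 (a11 + b11) (a12 + b12) (a13 + b13) (a21 + b21) (a22 + b22) (a23 + b23)
    (a31 + b31) (a32 + b32) (a33 + b33).
Proof. by rewrite /blk3 !add_block_mx add_col_mx add_row_mx. Qed.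

Lemma opp_blk3 (a11 a13 a31 a33 : 'M[R]_1) (a12 a32 : 'M[R]_(1, n))
    (a21 a23 : 'M[R]_(n, 1)) (a22 : 'M[R]_n) :
  - blk3 a11 a12 a13 a21 a22 a23 a31 a32 a33 =
  blk3 (- a11) (- a12) (- a13) (- a21) (- a22) (- a23) (- a31) (- a32) (- a33).
Proof. by rewrite /blk3 !opp_block_mx opp_col_mx opp_row_mx. Qed.

Lemma scale_blk3 k (a11 a13 a31 a33 : 'M[R]_1) (a12 a32 : 'M[R]_(1, n))
    (a21 a23 : 'M[R]_(n, 1)) (a22 : 'M[R]_n) :
  k *: blk3 a11 a12 a13 a21 a22 a23 a31 a32 a33 =
  blk3 (k *: a11) (k *: a12) (k *: a13) (k *: a21) (k *: a22) (k *: a23)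
    (k *: a31) (k *: a32) (k *: a33).
Proof. by rewrite /blk3 !scale_block_mx scale_col_mx scale_row_mx. Qed.

Lemma mul_blk3 (a11 a13 a31 a33 b11 b13 b31 b33 : 'M[R]_1)
    (a12 a32 b12 b32 : 'M[R]_(1, n)) (a21 a23 b21 b23 : 'M[R]_(n, 1))
    (a22 b22 : 'M[R]_n) :
  blk3 a11 a12 a13 a21 a22 a23 a31 a32 a33 *m blk3 b11 b12 b13 b21 b22 b23 b31 b32 b33 =
  blk3 (a11 *m b11 + a12 *m b21 + a13 *m b31) (a11 *m b12 + a12 *m b22 + a13 *m b32)
       (a11 *m b13 + a12 *m b23 + a13 *m b33)
       (a21 *m b11 + a22 *m b21 + a23 *m b31) (a21 *m b12 + a22 *m b22 + a23 *m b32)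
       (a21 *m b13 + a22 *m b23 + a23 *m b33)
       (a31 *m b11 + a32 *m b21 + a33 *m b31) (a31 *m b12 + a32 *m b22 + a33 *m b32)
       (a31 *m b13 + a32 *m b23 + a33 *m b33).
Proof.
by rewrite /blk3 !mulmx_block mul_block_col mul_row_block mul_row_col
  mul_col_row mul_col_mx mul_mx_row add_block_mx add_col_mx add_row_mx.
Qed.

Global Instance is_derive_blk3 (V : normedModType R) (x v : V)
    (f11 f13 f31 f33 : V -> 'M[R]_1) (f12 f32 : V -> 'M[R]_(1, n))
    (f21 f23 : V -> 'M[R]_(n, 1)) (f22 : V -> 'M[R]_n)
    d11 d12 d13 d21 d22 d23 d31 d32 d33 :
  is_derive x v f11 d11 -> is_derive x v f12 d12 -> is_derive x v f13 d13 ->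
  is_derive x v f21 d21 -> is_derive x v f22 d22 -> is_derive x v f23 d23 ->
  is_derive x v f31 d31 -> is_derive x v f32 d32 -> is_derive x v f33 d33 ->
  is_derive x v (fun t => blk3 (f11 t) (f12 t) (f13 t) (f21 t) (f22 t) (f23 t)
                           (f31 t) (f32 t) (f33 t))
    (blk3 d11 d12 d13 d21 d22 d23 d31 d32 d33).
Proof. by move=> *; do ![apply: is_derive_col_mx | apply: is_derive_row_mx]. Qed.

End BlockMatrices.

Section Commutator.
Variables (R : realType) (m : nat).
Implicit Types X Y Z : 'M[R]_m.

Lemma commmxDl X Y Z : commmx (X + Y) Z = commmx X Z + commmx Y Z.
Proof. by rewrite /commmx mulmxDl mulmxDr opprD addrACA. Qed.

Lemma commmxDr X Y Z : commmx X (Y + Z) = commmx X Y + commmx X Z.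
Proof. by rewrite /commmx mulmxDl mulmxDr opprD addrACA. Qed.

Lemma commmxZl a X Y : commmx (a *: X) Y = a *: commmx X Y.
Proof. by rewrite /commmx -scalemxAl -scalemxAr scalerBr. Qed.

Lemma commmxZr a X Y : commmx X (a *: Y) = a *: commmx X Y.
Proof. by rewrite /commmx -scalemxAl -scalemxAr scalerBr. Qed.

Lemma commmxx X : commmx X X = 0.
Proof. exact: subrr. Qed.

Lemma commmxC X Y : commmx X Y = - commmx Y X.
Proof. by rewrite /commmx opprB. Qed.

End Commutator.

Section LaxMatrices.
Variables (R : realType) (n : nat).
Implicit Types (u v du dv ddu ddv : 'cV[R]_n) (A : 'M[R]_n).

Lemma commmx_calB0_blk3 (a11 a13 a31 a33 : 'M[R]_1) (a12 a32 : 'M[R]_(1, n))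
    (a21 a23 : 'M[R]_(n, 1)) (a22 : 'M[R]_n) :
  commmx (calB0 R n) (blk3 a11 a12 a13 a21 a22 a23 a31 a32 a33) =
  blk3 0 (- a12) (- (a13 *+ 2)) a21 0 (- a23) (a31 *+ 2) a32 0.
Proof.
rewrite /commmx /calB0 !mul_blk3 opp_blk3 add_blk3.
rewrite !(mul0mx, mulmx0, mulNmx, mulmxN, mul1mx, mulmx1, addr0, add0r, oppr0).
by rewrite !opprK addNr subrr -opprD -!mulr2n.
Qed.

Lemma commmx_calB0_calB1 u v : commmx (calB0 R n) (calB1 u v) = calB1 u (- v).
Proof. by rewrite commmx_calB0_blk3 /calB1 !mul0rn !oppr0 trmxN. Qed.

Lemma commmx_calB0_calB2 A u v du dv :
  commmx (calB0 R n) (calB2 A u v du dv) = calB1 du dv.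
Proof. by rewrite commmx_calB0_blk3 /calB1 !mul0rn oppr0. Qed.

Lemma calB1D u1 v1 u2 v2 : calB1 (u1 + u2) (v1 + v2) = calB1 u1 v1 + calB1 u2 v2.
Proof. by rewrite /calB1 add_blk3 !trmxD !opprD !addr0. Qed.

Lemma calB1Z a u v : calB1 (a *: u) (a *: v) = a *: calB1 u v.
Proof. by rewrite /calB1 scale_blk3 !trmxZ !scalerN !scaler0. Qed.

Lemma calB1N u v : calB1 (- u) (- v) = - calB1 u v.
Proof. by rewrite /calB1 opp_blk3 !oppr0 !trmxN. Qed.

Global Instance is_derive_calB1 (V : normedModType R) (x w : V) (f g : V -> 'cV[R]_n)
    df dg :
  is_derive x w f df -> is_derive x w g dg ->
  is_derive x w (fun t => calB1 (f t) (g t)) (calB1 df dg).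
Proof.
by move=> *; apply: is_derive_blk3; solve [exact: is_derive_cst | typeclasses eauto].
Qed.

Definition calB2_deriv u v du dv ddu ddv : 'M[R]_(1 + n + 1) :=
  blk3 (- (dotv du v + dotv u dv)%:M) ddv^T 0
       ddu (du *m v^T + u *m dv^T - (dv *m u^T + v *m du^T)) ddv
       0 ddu^T (dotv du v + dotv u dv)%:M.

Global Instance is_derive_calB2 (V : normedModType R) (x w : V) A
    (f g p q : V -> 'cV[R]_n) df dg dp dq :
  is_derive x w f df -> is_derive x w g dg ->
  is_derive x w p dp -> is_derive x w q dq ->
  is_derive x w (fun t => calB2 A (f t) (g t) (p t) (q t))
    (calB2_deriv (f x) (g x) df dg dp dq).
Proof. by move=> *; apply: is_derive_eq; rewrite addr0. Qed.

Lemma calB2_deriv_lax A (skewA : A^T = - A) u v du dv ddu ddv :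
  calB2_deriv u v du dv ddu ddv =
  commmx (calB1 u v) (calB2 A u v du dv)
  + calB1 (ddu + (2 * dotv u v) *: u - dotv u u *: v + A *m u)
          (- (ddv + (2 * dotv u v) *: v - dotv v v *: u - A *m v)).
Proof.
rewrite /calB2_deriv /commmx /calB1 /calB2 !mul_blk3 opp_blk3 !add_blk3.
congr blk3.
all: rewrite ?(mul0mx, mulmx0, mulNmx, mulmxN, mulmxDl, mulmxDr, mulmxBl, mulmxBr).
all: rewrite ?(trmxD, trmxN, trmxZ, trmx_mul, skewA, mulmxN).
all: rewrite ?(mulmx_outerr, mulmx_outerl, trmx_mul_dotv, mul_mx_scalar, mul_scalar_mx).
all: rewrite ?(dotvC v u, dotvC dv u, dotvC v du, dotvC dv v, dotvC du u).
all: apply/matrixP => i j; rewrite ?[i]ord1 ?[j]ord1 !mxE ?eqxx ?mulr1n; ring.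
Qed.

End LaxMatrices.

Lemma addrAC_eqN (V : zmodType) (x a b : V) : x + a + b = 0 -> x + b = - a.
Proof. by move=> h; apply/eqP; rewrite -subr_eq0 opprK addrAC h. Qed.

Section IsomonodromicLaxPairs.
Variables (R : realType) (n : nat) (A : 'M[R]_n) (u v : R -> 'cV[R]_n).
Hypothesis skewA : A^T = - A.
Hypotheses (u_derivable : forall z, derivable u z 1) (v_derivable : forall z, derivable v z 1).
Hypotheses (du_derivable : forall z, derivable (derive1 u) z 1)
  (dv_derivable : forall z, derivable (derive1 v) z 1).

Local Notation u' := (derive1 u).
Local Notation v' := (derive1 v).
Local Notation u'' := (derive1 (derive1 u)).
Local Notation v'' := (derive1 (derive1 v)).

Let Du (z : R) : is_derive z 1 u (u' z) := derivable1_is_derive (@u_derivable z).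
Let Dv (z : R) : is_derive z 1 v (v' z) := derivable1_is_derive (@v_derivable z).
Let Ddu (z : R) : is_derive z 1 u' (u'' z) := derivable1_is_derive (@du_derivable z).
Let Ddv (z : R) : is_derive z 1 v' (v'' z) := derivable1_is_derive (@dv_derivable z).
#[local] Existing Instances Du Dv Ddu Ddv.
(* Derivatives of calB1 and calB2 are then found by is_derive_calB1 and
   is_derive_calB2 rather than by unfolding them into blocks. *)
#[local] Typeclasses Opaque calB1 calB2.

Lemma isomonodromic_lax_a (z zeta : R) :
  u'' z + (2 * dotv (u z) (v z)) *: u z - dotv (u z) (u z) *: v z
    + (z / 2) *: u z + A *m u z = 0 ->
  v'' z + (2 * dotv (u z) (v z)) *: v z - dotv (v z) (v z) *: u z
    + (z / 2) *: v z - A *m v z = 0 ->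
  derive1 (fun t => (2 * zeta ^+ 2 + t) *: calB0 R n + (2 * zeta) *: calB1 (u t) (v t)
                      + 2 *: calB2 A (u t) (v t) (u' t) (v' t)) z
  = derive1 (fun s => s *: calB0 R n + calB1 (u z) (v z)) zeta
    + commmx (zeta *: calB0 R n + calB1 (u z) (v z))
        ((2 * zeta ^+ 2 + z) *: calB0 R n + (2 * zeta) *: calB1 (u z) (v z)
         + 2 *: calB2 A (u z) (v z) (u' z) (v' z)).
Proof.
move=> /addrAC_eqN ode_u /addrAC_eqN ode_v.
set B0 := calB0 R n; set B1 := calB1 (u z) (v z).
set B2 := calB2 A (u z) (v z) (u' z) (v' z).
have dB1 : calB1 (u' z) (v' z) = commmx B0 B2 by rewrite commmx_calB0_calB2.
have dB2 : calB2_deriv (u z) (v z) (u' z) (v' z) (u'' z) (v'' z)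
           = commmx B1 B2 - (z / 2) *: commmx B0 B1.
  by rewrite (calB2_deriv_lax skewA) ode_u ode_v commmx_calB0_calB1 -calB1Z -calB1N scalerN.
rewrite !derive1E !derive_val dB1 dB2 add0r !scale1r !scaler0 !addr0.
rewrite !(commmxDl, commmxDr, commmxZl, commmxZr) !commmxx (commmxC B1 B0).
clearbody B0 B1 B2.
move: (commmx B0 B1) (commmx B0 B2) (commmx B1 B2) => P Q S.
by apply/matrixP => i j; rewrite !mxE; field.
Qed.

Lemma isomonodromic_lax_b (z zeta : R) : zeta != 0 ->
  u'' z + (2 * dotv (u z) (v z)) *: u z - dotv (u z) (u z) *: v z
    + 2^-1 *: derive1 (fun t => t *: u t) z + A *m u z = 0 ->
  v'' z + (2 * dotv (u z) (v z)) *: v z - dotv (v z) (v z) *: u z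
    - 2^-1 *: derive1 (fun t => t *: v t) z - A *m v z = 0 ->
  derive1 (fun t => (2 + t / zeta) *: (zeta *: calB0 R n + calB1 (u t) (v t))
                      + (2 / zeta) *: calB2 A (u t) (v t) (u' t) (v' t)) z
  = derive1 (fun s => s *: calB0 R n + calB1 (u z) (v z)) zeta
    + commmx (zeta *: calB0 R n + calB1 (u z) (v z))
        ((2 + z / zeta) *: (zeta *: calB0 R n + calB1 (u z) (v z))
         + (2 / zeta) *: calB2 A (u z) (v z) (u' z) (v' z)).
Proof.
move=> zeta0; rewrite !derive1E !derive_val !scale1r [zeta^-1%:A]mulr1.
move=> /addrAC_eqN ode_u /addrAC_eqN ode_v.
set B0 := calB0 R n; set B1 := calB1 (u z) (v z).
set B2 := calB2 A (u z) (v z) (u' z) (v' z).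
have dB1 : calB1 (u' z) (v' z) = commmx B0 B2 by rewrite commmx_calB0_calB2.
have dB2 : calB2_deriv (u z) (v z) (u' z) (v' z) (u'' z) (v'' z)
           = commmx B1 B2 - 2^-1 *: (B1 + z *: commmx B0 B2).
  by rewrite (calB2_deriv_lax skewA) ode_u ode_v opprK -dB1 -calB1Z -calB1D -calB1Z -calB1N.
rewrite dB2 dB1 !scaler0 !add0r !addr0.
rewrite !(commmxDl, commmxDr, commmxZl, commmxZr) !commmxx (commmxC B1 B0).
clearbody B0 B1 B2.
move: (commmx B0 B1) (commmx B0 B2) (commmx B1 B2) => P Q S.
by apply/matrixP => i j; rewrite !mxE; field.
Qed.

End IsomonodromicLaxPairs.

Theorem mainTheorem10 (R : realType) (n : nat) (A : 'M[R]_n)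
  (u v : R -> 'cV[R]_n) :
  (1 <= n)%N ->
  A^T = - A ->
  (forall z, derivable u z 1) -> (forall z, derivable v z 1) ->
  (forall z, derivable (derive1 u) z 1) -> (forall z, derivable (derive1 v) z 1) ->
  (* (a) *)
  ((forall z,
      derive1 (derive1 u) z + (2 * dotv (u z) (v z)) *: u z - dotv (u z) (u z) *: v z
        + (z / 2) *: u z + A *m u z = 0 /\
      derive1 (derive1 v) z + (2 * dotv (u z) (v z)) *: v z - dotv (v z) (v z) *: u z
        + (z / 2) *: v z - A *m v z = 0) ->
   let calB := fun z zeta => zeta *: calB0 R n + calB1 (u z) (v z) in
   let calA := fun z zeta =>
     (2 * zeta ^+ 2 + z) *: calB0 R n + (2 * zeta) *: calB1 (u z) (v z)
       + 2 *: calB2 A (u z) (v z) (derive1 u z) (derive1 v z) in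
   forall z zeta,
     derive1 (fun t => calA t zeta) z
       = derive1 (fun s => calB z s) zeta + commmx (calB z zeta) (calA z zeta))
  /\
  (* (b) *)
  ((forall z,
      derive1 (derive1 u) z + (2 * dotv (u z) (v z)) *: u z - dotv (u z) (u z) *: v z
        + 2^-1 *: derive1 (fun t => t *: u t) z + A *m u z = 0 /\
      derive1 (derive1 v) z + (2 * dotv (u z) (v z)) *: v z - dotv (v z) (v z) *: u z
        - 2^-1 *: derive1 (fun t => t *: v t) z - A *m v z = 0) ->
   let calB := fun z zeta => zeta *: calB0 R n + calB1 (u z) (v z) in
   let calA := fun z zeta =>
     (2 + z / zeta) *: (zeta *: calB0 R n + calB1 (u z) (v z))
       + (2 / zeta) *: calB2 A (u z) (v z) (derive1 u z) (derive1 v z) in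
   forall z zeta, zeta != 0 ->
     derive1 (fun t => calA t zeta) z
       = derive1 (fun s => calB z s) zeta + commmx (calB z zeta) (calA z zeta)).
Proof.
(* The argument works for every n. *)
move=> _ skewA du dv ddu ddv.
split=> ode calB calA z zeta; have [ode_u ode_v] := ode z.
- exact: isomonodromic_lax_a.
- by move=> zeta0; exact: isomonodromic_lax_b.
Qed.
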